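(* Let $L=\{0,1,\dots,m\}^n$ with componentwise order, and let $f_1,\dots,f_n:L\to L$ be inflationary. Consider one round $t$ of a non-interleaving execution with update-only-on-change starting from the committed state $G_t$, in which the functions $f_i$, $i\in S_t$, are executed. Then for every coordinate $j$: (1) every write to coordinate $j$ during round $t$ writes a value $\ge G_t[j]$; (2) $G_{t+1}[j]\ge G_t[j]$; (3) $G_{t+1}[j]=G_t[j]$ if and only if no write to coordinate $j$ occurs during round $t$.
   Context: Non-interleaving execution with update-only-on-change: execution proceeds in rounds $t=0,1,2,\dots$ with committed states $G_t\in L$. In round $t$ a set $S_t\subseteq\{1,\dots,n\}$ is chosen and each $f_i$, $i\in S_t$, is executed concurrently on shared memory: process $i$ reads a vector $X\in L$, where each coordinate $X[k]$ is read at some time during the round and returns either $G_t[k]$ or the value of some write to coordinate $k$ performed during the round (reads and writes overlapping arbitrarily; no memory consistency guarantee). Process $i$ computes $H=f_i(X)$ and, for each coordinate $k$, issues a write of $H[k]$ to coordinate $k$ if and only if $H[k]\neq X[k]$ (update-only-on-change). When several writes to the same coordinate occur, the final value is the value of one of them (last writer wins, in an arbitrary order). At the end of the round, $G_{t+1}[k]$ equals $G_t[k]$ if no write to coordinate $k$ occurred, and otherwise equals the value of one of the writes to coordinate $k$ during the round. A function $f$ is inflationary if $f(G)\ge G$ for all $G$. *)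

From mathcomp Require Import all_boot all_order.
Set Implicit Arguments. Unset Strict Implicit. Unset Printing Implicit Defensive.

Definition Lat (n m : nat) := {ffun 'I_n -> 'I_m.+1}.

Definition leL n m (G H : Lat n m) : Prop := forall k : 'I_n, (G k <= H k)%N.

Definition inflationary n m (f : Lat n m -> Lat n m) : Prop :=
  forall G : Lat n m, leL G (f G).

(* One round of a non-interleaving execution with update-only-on-change.
   - G : committed state G_t;  S : the set S_t of executed processes;
   - X i : the vector read by process i (for i in S);
   - process i writes (f i (X i)) k to coordinate k iff i \in S and
     (f i (X i)) k != (X i) k;
   - each read coordinate returns G k or the value of some write to k in the round;
   - G' : the committed state G_{t+1}. *)
Definition writes n m (f : 'I_n -> Lat n m -> Lat n m) (S : {set 'I_n})
  (X : 'I_n -> Lat n m) (i k : 'I_n) : bool :=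
  (i \in S) && (f i (X i) k != X i k).

Definition valid_round n m (f : 'I_n -> Lat n m -> Lat n m) (S : {set 'I_n})
  (G : Lat n m) (X : 'I_n -> Lat n m) (G' : Lat n m) : Prop :=
  (forall i k, i \in S ->
     X i k = G k \/ exists i', writes f S X i' k /\ X i k = f i' (X i') k) /\
  (forall k, (forall i, ~~ writes f S X i k) -> G' k = G k) /\
  (forall k, (exists i, writes f S X i k) ->
     exists i, writes f S X i k /\ G' k = f i (X i) k).

From mathcomp Require Import all_boot all_order.

(* A process writes to coordinate k only when it changes the value it read,
   so by inflationarity each written value strictly exceeds the value read.
   That read value is either the committed value G k or itself a written
   value, which is smaller; descending along reads (well-founded on nat)
   always ends at G k, hence every write strictly exceeds G k.  Claims (2)
   and (3) then follow from the commit rule. *)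

Set Implicit Arguments.
Unset Strict Implicit.
Unset Printing Implicit Defensive.

Lemma gt_base_of_descent (g : nat) (P : nat -> Prop) :
  (forall v, P v -> exists2 u, u < v & u = g \/ P u) ->
  forall v, P v -> g < v.
Proof.
move=> descent; elim/ltn_ind=> v IH /descent [u lt_uv [eq_ug | Pu]].
  by rewrite -eq_ug.
exact: ltn_trans (IH u lt_uv Pu) lt_uv.
Qed.

Section Round.

Variables (n m : nat) (f : 'I_n -> Lat n m -> Lat n m).
Variables (S : {set 'I_n}) (G : Lat n m) (X : 'I_n -> Lat n m).
Hypothesis f_infl : forall i, inflationary (f i).

Lemma write_gt_read i k : writes f S X i k -> X i k < f i (X i) k.
Proof.
case/andP=> _ changed; rewrite ltn_neqAle f_infl andbT.
by apply: contra changed => /eqP/val_inj ->.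
Qed.

Hypothesis reads_valid : forall i k, i \in S ->
  X i k = G k \/ exists i', writes f S X i' k /\ X i k = f i' (X i') k.

Lemma write_gt_committed i k : writes f S X i k -> G k < f i (X i) k.
Proof.
pose written v := exists i, writes f S X i k /\ v = f i (X i) k :> nat.
have descent v : written v -> exists2 u, u < v & u = G k \/ written u.
  case=> {}i [w_ik ->]; exists (X i k); first exact: write_gt_read.
  have [->|[i' [w_i'k ->]]] := reads_valid k (andP w_ik).1; first by left.
  by right; exists i'.
by move=> w_ik; apply: (gt_base_of_descent descent); exists i.
Qed.

End Round.

Theorem lemma1 (n m : nat) (f : 'I_n -> Lat n m -> Lat n m)
  (S : {set 'I_n}) (G : Lat n m) (X : 'I_n -> Lat n m) (G' : Lat n m) :
  (forall i, inflationary (f i)) ->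
  valid_round f S G X G' ->
  forall j : 'I_n,
    (forall i, writes f S X i j -> (G j <= f i (X i) j)%N) /\
    (G j <= G' j)%N /\
    (G' j = G j <-> ~ exists i, writes f S X i j).
Proof.
move=> f_infl [reads_valid [commit_unwritten commit_written]] j.
have write_gt := write_gt_committed f_infl reads_valid (k := j).
split=> [i /write_gt/ltnW // |].
have [/existsP [i w_ij] | /existsPn no_write] := boolP [exists i, writes f S X i j].
  have [i' [w_i'j ->]] := commit_written j (ex_intro _ i w_ij).
  have lt_G := write_gt i' w_i'j.
  split; first exact: ltnW.
  by split=> [eq_G | []]; [rewrite eq_G ltnn in lt_G | exists i].
rewrite commit_unwritten //; split=> //; split=> // _ [i].
exact/negP/no_write.
Qed.
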